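(* There is a function $C(t,\epsilon)$ such that the following holds for every positive integer $t$ and every $\epsilon\in(0,1)$: let $G$ be a connected balanced bipartite graph with parts $X,Y$ each of order $n$, with $\delta(G)\geq 3C(t,\epsilon)$ and with no induced $S_{t,t}$. Then \[\Delta_X,\ \Delta_Y\geq \left(1-\frac{C(t,\epsilon)}{\delta(G)}\right)(1-10\epsilon)\,n.\]
   Context: For positive integers $a,b$, the biclaw $S_{a,b}$ is the graph with vertex set $\{x,x_1,\dots,x_a,y,y_1,\dots,y_b\}$ and edges $xy$, $xy_1,\dots,xy_b$, $yx_1,\dots,yx_a$; ''no induced $S_{t,t}$'' means no induced subgraph isomorphic to $S_{t,t}$. For a bipartite graph with parts $X,Y$, $\Delta_X=\max_{x\in X} d(x)$ and $\Delta_Y=\max_{y\in Y} d(y)$. $\delta(G)$ is the minimum degree. *)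

From HB Require Import structures.
From mathcomp Require Import all_boot all_order all_algebra.
From mathcomp Require Import reals.
Set Implicit Arguments. Unset Strict Implicit. Unset Printing Implicit Defensive.

(* A simple graph on a finType T is a symmetric irreflexive relation e. *)

Definition deg (T : finType) (e : rel T) (v : T) : nat := #|[set u | e v u]|.

(* minimum degree delta(G); the identity #|T| is only used when T is empty *)
Definition mindeg (T : finType) (e : rel T) : nat :=
  \big[minn/#|T|]_(v : T) deg e v.

Definition maxdeg_in (T : finType) (e : rel T) (A : {set T}) : nat :=
  \max_(v in A) deg e v.

(* vertices of the biclaw S_{a,b}:
   inl None = x, inl (Some i) = x_i, inr None = y, inr (Some j) = y_j *)
Definition biclaw_vertex (a b : nat) : finType :=
  (option 'I_a + option 'I_b)%type.

Definition biclaw_adj0 (a b : nat) (u v : biclaw_vertex a b) : bool :=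
  match u, v with
  | inl None, inr _ => true
  | inl (Some _), inr None => true
  | _, _ => false
  end.

(* symmetric closure: edges xy, x y_j, y x_i *)
Definition biclaw_adj (a b : nat) (u v : biclaw_vertex a b) : bool :=
  biclaw_adj0 u v || biclaw_adj0 v u.

Definition has_induced_biclaw (T : finType) (e : rel T) (a b : nat) : Prop :=
  exists f : biclaw_vertex a b -> T,
    injective f /\ forall u v, e (f u) (f v) = biclaw_adj u v.

From HB Require Import structures.
From mathcomp Require Import all_boot all_order all_algebra.
From mathcomp Require Import reals.
From mathcomp Require Import ring lra zify.
Import Order.TTheory GRing.Theory Num.Theory.

Set Implicit Arguments. Unset Strict Implicit. Unset Printing Implicit Defensive.

(* Let m be about 1/eps and K = t (2m)^t.  As G has no induced S_{t,t}, for
   every edge xy and every large set Q of neighbours of x, fewer than K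
   neighbours of y miss a 1/m fraction of Q: otherwise t rounds of greedy
   choice, each keeping a 1/(2m) fraction of the candidates, produce t
   neighbours of y and t neighbours of x with no edge between them.

   Fix x0 of maximum degree in X and a neighbour y0.  The core consists of
   the neighbours of y0 that see almost all of N(x0) and the neighbours of x0
   that see almost all of N(y0); a vertex is rich if it has nearly
   (1 - 2/m) min(d(x0), d(y0)) neighbours in the core.  By the key lemma, a
   neighbour of the core has at most K non-rich neighbours, and a neighbour
   of a rich vertex has at most K neighbours outside N(core).  As
   delta >> K, the successive layers around N(core) shrink by a factor 4, so
   all but O(K n / delta) vertices lie in N(core), and by double counting all
   but O(K n / delta) of those are rich.  Finally a rich y in Y outside N(x0)
   has almost (1 - 2/m) min(d(x0), d(y0)) core neighbours, all in N(y0),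
   while each of these has degree at most d(x0) and sees almost all of N(x0),
   hence has at most 1 + d(x0)/m neighbours outside N(x0).  Double counting
   leaves O(n/m + n/delta) such y, so d(x0) >= (1 - O(1/m) - O(K m/delta)) n. *)

Section Counting.
Variable T : finType.

Lemma card_set_sum (A : {set T}) (p : pred T) :
  #|[set a in A | p a]| = \sum_(a in A) p a.
Proof.
rewrite -sum1_card (eq_bigl (fun a => (a \in A) && p a)) => [|a]; last by rewrite inE.
by rewrite big_mkcondr; apply: eq_bigr => a _; case: (p a).
Qed.

Lemma double_count (r : rel T) (A B : {set T}) :
  \sum_(a in A) #|[set b in B | r a b]| = \sum_(b in B) #|[set a in A | r a b]|.
Proof.
under eq_bigr do rewrite card_set_sum.
by rewrite exchange_big; apply: eq_bigr => b _; rewrite card_set_sum.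
Qed.

Lemma double_count_leq (r : rel T) (A B : {set T}) c k l :
  {in A, forall a, k <= c * #|[set b in B | r a b]|} ->
  {in B, forall b, c * #|[set a in A | r a b]| <= l} -> #|A| * k <= l * #|B|.
Proof.
move=> hA hB; rewrite -sum_nat_const mulnC -sum_nat_const.
apply: leq_trans (_ : \sum_(a in A) c * #|[set b in B | r a b]| <= _).
  exact: leq_sum.
by rewrite -big_distrr double_count big_distrr; apply: leq_sum.
Qed.

Lemma exists_gt_of_sum (A : {set T}) (c : T -> nat) k :
  #|A| * k < \sum_(a in A) c a -> exists2 a, a \in A & k < c a.
Proof.
move=> hsum; apply/exists_inP; apply: contraLR hsum => /exists_inP hA.
rewrite -leqNgt -sum_nat_const; apply: leq_sum => a aA.
by rewrite leqNgt; apply/negP => hk; apply: hA; exists a.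
Qed.

Lemma card_setD_le_of_setD1 (A B C : {set T}) x k : C \subset B ->
  #|(A :\ x) :\: C| < k -> #|A :\: B| <= k.
Proof.
move=> sCB; apply: leq_trans; rewrite (cardsD1 x) addnC -addn1 leq_add ?leq_b1 //.
apply/subset_leq_card/subsetP => a; rewrite !in_setD !in_set1.
by case/and3P=> -> aB ->; rewrite (contraNN (subsetP sCB a) aB).
Qed.

Lemma card_le_cover_setI (N A B : {set T}) v :
  #|N| <= #|(A :&: B) :\ v| + #|N :\: A| + #|N :\: B| + 1.
Proof.
have sN : N \subset (A :&: B) :\ v :|: (N :\: A) :|: (N :\: B) :|: [set v].
  apply/subsetP => b bN; rewrite !in_setU !in_setD !in_setI !in_set1 bN !andbT.
  by case: (b == v); case: (b \in A); case: (b \in B).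
rewrite -(cards1 v); apply: leq_trans (subset_leq_card sN) _.
apply: leq_trans (leq_card_setU _ _) _; rewrite leq_add2r.
apply: leq_trans (leq_card_setU _ _) _; rewrite leq_add2r.
exact: leq_card_setU.
Qed.

Lemma mindeg_le (e : rel T) v : mindeg e <= deg e v.
Proof.
rewrite /mindeg; have : v \in index_enum T by rewrite mem_index_enum.
elim: (index_enum T) => // a r IH; rewrite inE big_cons => /orP[/eqP <-|/IH h].
  exact: geq_minl.
by rewrite geq_min h orbT.
Qed.

End Counting.

(* In the next two lemmas, with the notation of [card_nbhd_core_sparse_lt],
   qu = |Nu|, na = |Nu :\: N(a)|, nt = |Nu :\: typical w u|, q = |Q|,
   r = |Q :\: N(p)|, c = core_deg p and nu = |N(u)|. *)
Lemma typical_overlap_arith m K t qu na nt q : 6 <= m -> 2 * m * t <= K ->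
  m * na < qu -> nt < K -> qu <= q + na + nt + 1 -> 120 * m * (K + 2) <= qu + 1 ->
  2 * m * t <= q.
Proof. nia. Qed.

Lemma core_deg_arith m K qu na nt q r c nu : 6 <= m ->
  m * na < qu -> nt < K -> qu <= q + na + nt + 1 -> q <= qu ->
  m * r < q -> q <= c + r -> nu <= qu + 1 -> (m - 2) * nu <= m * (c + K + 2).
Proof. nia. Qed.

Lemma rich_core_deg_arith m K d s c : 6 <= m -> 120 * m * (K + 2) <= d -> d <= s ->
  (m - 2) * s <= m * (c + K + 2) -> K < c.
Proof.
move=> m_ge6 hd hs hc; rewrite ltnNge; apply/negP => cK.
have : (m - 2) * (120 * m * (K + 2)) <= m * (c + K + 2).
  by apply: leq_trans _ hc; apply: leq_mul => //; apply: leq_trans hs.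
nia.
Qed.

Lemma six_K_arith m K d : 6 <= m -> 120 * m * (K + 2) <= d -> 6 * K <= d.
Proof. by move=> m_ge6; apply: leq_trans; nia. Qed.

Lemma rich_nonnbr_arith n a D d m K Y : 6 <= m -> 120 * m * (K + 2) <= d ->
  d <= minn a D -> a <= n -> D <= n ->
  Y * ((m - 2) * minn a D - m * (K + 2)) <= (m + D) * a ->
  m * d * Y <= 2 * n * d + 2 * m * n.
Proof.
move=> m_ge6 hd hs ha hD hY; set s := minn a D in hs hY.
have mK_le_s : 120 * (m * (K + 2)) <= s by rewrite mulnA; apply: leq_trans hs.
have half : m * s <= 2 * ((m - 2) * s - m * (K + 2)) by nia.
have sum_le : (m + D) * a <= m * n + n * s.
  rewrite mulnDl leq_add ?leq_mul2l ?ha ?orbT //; rewrite /s.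
  case: (leqP a D) => _; first by rewrite leq_mul2r hD orbT.
  by rewrite mulnC leq_mul2r ha orbT.
have Yms : Y * (m * s) <= 2 * (m * n + n * s).
  apply: leq_trans (leq_mul (leqnn Y) half) _.
  by rewrite mulnCA leq_mul2l /= (leq_trans hY sum_le).
have s_gt0 : 0 < s.
  by apply: leq_trans hs; apply: leq_trans hd; rewrite !muln_gt0 addn2 andbT; lia.
rewrite -(leq_pmul2r s_gt0).
have := leq_mul Yms (leqnn d); have : m * n * d <= m * n * s by rewrite leq_mul2l hs orbT.
lia.
Qed.

Lemma nonnbr_arith n d m K Y Z1 Z2 r : 6 <= m -> 120 * m * (K + 2) <= d ->
  m * d * Y <= 2 * n * d + 2 * m * n -> 3 * Z1 * (d - K) <= 4 * K * (2 * n) ->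
  Z2 * (d - K) <= K * (2 * n) -> r <= Y + Z1 + Z2 ->
  m * d * r <= 2 * n * d + m * n * (40 * m * (K + 2)).
Proof.
move=> m_ge6 hd hY hZ1 hZ2 hr.
have two_K : 2 * K <= d by apply: leq_trans hd; nia.
have [d' def_d] : exists d', d = d' + K by exists (d - K); lia.
have K_le_d' : K <= d' by lia.
subst d; rewrite addnK in hZ1 hZ2.
have hZ : 3 * (Z1 + Z2) * (d' + K) <= 28 * K * n.
  have := leq_mul (leqnn Z1) K_le_d'; have := leq_mul (leqnn Z2) K_le_d'; lia.
have := leq_mul (leqnn (m * (d' + K))) hr; have := leq_mul (leqnn m) hZ.
have : 2 + 10 * K <= 40 * m * (K + 2) by nia.
move/(leq_mul (leqnn (m * n))); lia.
Qed.

(** * Graphs without an induced biclaw *)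

Section BiclawFree.
Variables (T : finType) (e : rel T) (X : {set T}).
Hypotheses (e_sym : symmetric e)
  (e_bip : forall u v, e u v -> (u \in X) != (v \in X)).

Definition nbhd v := [set u | e v u].
Definition nbhdS (U : {set T}) := [set v | [exists u in U, e v u]].

Lemma in_nbhd u v : (u \in nbhd v) = e v u.
Proof. by rewrite inE. Qed.

Lemma nbhdS_intro (U : {set T}) u v : u \in U -> e v u -> v \in nbhdS U.
Proof. by move=> uU evu; rewrite inE; apply/exists_inP; exists u. Qed.

Lemma nbhdS_mono (U V : {set T}) : U \subset V -> nbhdS U \subset nbhdS V.
Proof.
move=> sUV; apply/subsetP => v; rewrite !inE => /exists_inP[u uU evu].
by apply/exists_inP; exists u => //; apply: (subsetP sUV).
Qed.

Lemma mindeg_le_nbhd v : mindeg e <= #|nbhd v|.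
Proof. exact: mindeg_le. Qed.

Lemma nbhdS_closed_full (U : {set T}) : (forall u v, connect e u v) ->
  U != set0 -> nbhdS U \subset U -> U = setT.
Proof.
move=> conn /set0Pn[u uU] sU; apply/setP => v; rewrite inE.
have cl : closed e (mem U).
  apply: intro_closed; first exact: sym_connect_sym.
  by move=> a b eab aU; apply: (subsetP sU); apply: (nbhdS_intro aU); rewrite e_sym.
by rewrite -(closed_connect cl (conn u v)).
Qed.

Lemma nonedge_same_side u v : (u \in X) = (v \in X) -> e u v = false.
Proof. by move=> h; apply/negP => /e_bip; rewrite h eqxx. Qed.

Lemma edge_side u v : e u v -> (v \in X) = ~~ (u \in X).
Proof. by move/e_bip; case: (u \in X); case: (v \in X). Qed.

Lemma induced_biclaw_of a b x y (xs : 'I_a -> T) (ys : 'I_b -> T) :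
  e x y -> injective xs -> injective ys ->
  (forall i, (xs i != x) && e y (xs i)) -> (forall j, (ys j != y) && e x (ys j)) ->
  (forall i j, ~~ e (xs i) (ys j)) -> has_induced_biclaw e a b.
Proof.
move=> exy xs_inj ys_inj xsN ysN xs_ys.
pose f (u : biclaw_vertex a b) : T :=
  match u with
  | inl None => x | inl (Some i) => xs i
  | inr None => y | inr (Some j) => ys j end.
have side u : (f u \in X) = (if u is inl _ then x \in X else ~~ (x \in X)).
  have yX := edge_side exy.
  case: u => [[i|]|[j|]] //=.
  - by case/andP: (xsN i) => _ /edge_side ->; rewrite yX negbK.
  - by case/andP: (ysN j) => _ /edge_side.
have cross u v : e (f (inl u)) (f (inr v)) = biclaw_adj (inl u) (inr v).
  case: u v => [i|] [j|] /=; rewrite /biclaw_adj /= ?orbF //.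
  - exact/negbTE.
  - by rewrite e_sym; case/andP: (xsN i).
  - by case/andP: (ysN j).
have f_inj : injective f.
  move=> u v fuv; have := congr1 (mem X) fuv; rewrite /= !side.
  case: u v fuv => [[i|]|[j|]] [[i'|]|[j'|]] //= fuv sides;
    try by move: sides; case: (x \in X).
  - by rewrite (xs_inj _ _ fuv).
  - by move: (xsN i); rewrite fuv eqxx.
  - by move: (xsN i'); rewrite fuv eqxx.
  - by rewrite (ys_inj _ _ fuv).
  - by move: (ysN j); rewrite fuv eqxx.
  - by move: (ysN j'); rewrite fuv eqxx.
exists f; split=> // -[u|u] [v|v]; rewrite ?cross //.
- by rewrite nonedge_same_side ?side //; case: u v => [?|] [?|].
- by rewrite e_sym cross /biclaw_adj orbC.
- by rewrite nonedge_same_side ?side //; case: u v => [?|] [?|].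
Qed.

Lemma induced_biclaw_of_sets a b x y (P Q : {set T}) :
  e x y -> P \subset nbhd y :\ x -> Q \subset nbhd x :\ y -> a <= #|P| -> b <= #|Q| ->
  {in P & Q, forall p q, ~~ e p q} -> has_induced_biclaw e a b.
Proof.
move=> exy sP sQ aP bQ PQ.
pose xs i := @enum_val T (pred_of_set P) (widen_ord aP i).
pose ys j := @enum_val T (pred_of_set Q) (widen_ord bQ j).
apply: (@induced_biclaw_of a b x y xs ys exy).
- by move=> i j /enum_val_inj /(congr1 val) /= /val_inj.
- by move=> i j /enum_val_inj /(congr1 val) /= /val_inj.
- by move=> i; have := subsetP sP (xs i) (enum_valP _); rewrite !inE.
- by move=> j; have := subsetP sQ (ys j) (enum_valP _); rewrite !inE.
- by move=> i j; apply: PQ; apply: enum_valP.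
Qed.

Variables (t m : nat).
Hypotheses (t_gt0 : 0 < t) (m_gt0 : 0 < m).
Hypothesis no_biclaw : ~ has_induced_biclaw e t t.

Definition K := t * (2 * m) ^ t.

Lemma K_gt0 : 0 < K.
Proof. by rewrite /K muln_gt0 t_gt0 expn_gt0 muln_gt0 m_gt0. Qed.

Lemma two_m_t_le_K : 2 * m * t <= K.
Proof.
have : 2 * m <= (2 * m) ^ t by rewrite -{1}(expn1 (2 * m)) leq_pexp2l // muln_gt0 m_gt0.
by rewrite /K [2 * m * t]mulnC leq_mul2l orbC => ->.
Qed.

Definition far (Q : {set T}) p := #|Q| <= m * #|Q :\: nbhd p|.

Lemma exists_common_nonnbr (Q Q' P : {set T}) r :
  2 * m * t <= #|Q| -> Q' \subset Q -> #|Q'| < t ->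
  {in P, forall p, far Q p} -> 2 * m * r <= #|P| -> 0 < r ->
  exists2 q, q \in Q :\: Q' & r <= #|[set p in P | ~~ e p q]|.
Proof.
move=> hQ sQ' hQ' Pfar hP r_gt0; set S := Q :\: Q'.
have far_S p : p \in P -> #|Q| <= 2 * m * #|[set q in S | ~~ e p q]|.
  move=> /Pfar; rewrite /far => farp.
  have : #|Q :\: nbhd p| <= #|[set q in S | ~~ e p q]| + #|Q'|.
    apply: leq_trans (leq_card_setU _ _); apply: subset_leq_card; apply/subsetP => q.
    by rewrite !inE => /andP[nq qQ]; case: (q \in Q'); rewrite //= nq qQ.
  nia.
have sum_P : #|P| * #|Q| <= 2 * m * \sum_(p in P) #|[set q in S | ~~ e p q]|.
  by rewrite big_distrr -sum_nat_const; apply: leq_sum => p /far_S.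
have hS : #|S| <= #|Q| by apply/subset_leq_card/subsetDl.
have [q qS hq] : exists2 q, q \in S & r.-1 < #|[set p in P | ~~ e p q]|.
  apply: exists_gt_of_sum; rewrite -(double_count (fun p q => ~~ e p q)).
  have : 2 * m * (r * #|Q|) <= 2 * m * \sum_(p in P) #|[set q in S | ~~ e p q]|.
    by apply: leq_trans sum_P; rewrite mulnA leq_mul2r hP orbT.
  rewrite leq_pmul2l ?muln_gt0 ?m_gt0 //; apply: leq_trans.
  have : 0 < #|Q| by apply: leq_trans hQ; rewrite !muln_gt0 m_gt0 t_gt0.
  nia.
by exists q; rewrite // -(prednK r_gt0).
Qed.

Lemma card_far_lt x y (P Q : {set T}) :
  e x y -> P \subset nbhd y :\ x -> Q \subset nbhd x :\ y -> 2 * m * t <= #|Q| ->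
  #|[set p in P | far Q p]| < K.
Proof.
move=> exy sP sQ hQ; rewrite ltnNge; apply/negP => hK.
set F := [set p in P | far Q p].
have grow j : j <= t -> exists P' Q' : {set T},
    [/\ P' \subset F, Q' \subset Q, #|Q'| = j, t * (2 * m) ^ (t - j) <= #|P'|
      & {in P' & Q', forall p q, ~~ e p q}].
  elim: j => [_|j IH lt_jt].
    by exists F, set0; rewrite sub0set cards0 subn0; split=> // p q _; rewrite inE.
  have [P' [Q' [sP' sQ' cQ' cP' PQ']]] := IH (ltnW lt_jt).
  have [q] : exists2 q, q \in Q :\: Q' &
      t * (2 * m) ^ (t - j.+1) <= #|[set p in P' | ~~ e p q]|.
    apply: exists_common_nonnbr; rewrite ?cQ' //.
    - by move=> p /(subsetP sP'); rewrite inE => /andP[].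
    - by rewrite mulnCA -expnS subnSK.
    - by rewrite muln_gt0 t_gt0 expn_gt0 muln_gt0 m_gt0.
  rewrite inE => /andP[qQ' qQ] hq.
  exists [set p in P' | ~~ e p q], (q |: Q'); split.
  - by apply: subset_trans sP'; apply/subsetP => p; rewrite inE => /andP[].
  - by rewrite subUset sub1set qQ.
  - by rewrite cardsU1 qQ' cQ'.
  - exact: hq.
  move=> p q'; rewrite inE => /andP[pP' npq]; rewrite in_setU1 => /predU1P[->//|].
  exact: PQ'.
have [P' [Q' [sP' sQ' cQ' cP' PQ']]] := grow t (leqnn t).
apply: no_biclaw; apply: (induced_biclaw_of_sets exy _ _ _ _ PQ').
- apply: subset_trans sP; apply: subset_trans sP' _.
  by apply/subsetP => p; rewrite inE => /andP[].
- exact: subset_trans sQ' sQ.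
- by rewrite subnn expn0 muln1 in cP'.
- by rewrite cQ'.
Qed.

Lemma card_not_nbhdS_lt x y (P Q : {set T}) :
  e x y -> P \subset nbhd y :\ x -> Q \subset nbhd x :\ y -> 2 * m * t <= #|Q| ->
  #|P :\: nbhdS Q| < K.
Proof.
move=> exy sP sQ hQ; apply: leq_ltn_trans (card_far_lt exy sP sQ hQ).
apply/subset_leq_card/subsetP => p; rewrite !inE => /andP[noQ ->] /=.
rewrite /far (_ : Q :\: nbhd p = Q) ?leq_pmull //.
apply/setP => q; rewrite !inE andbC; case: (boolP (q \in Q)) => //= qQ.
by apply: contraNN noQ => epq; apply/exists_inP; exists q.
Qed.

Definition typical u w := [set a in nbhd w :\ u | ~~ far (nbhd u :\ w) a].

Lemma typical_sub u w : typical u w \subset nbhd w :\ u.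
Proof. by apply/subsetP => a; rewrite inE => /andP[]. Qed.

Lemma card_atypical_lt u w : e u w -> 2 * m * t <= #|nbhd u :\ w| ->
  #|(nbhd w :\ u) :\: typical u w| < K.
Proof.
move=> euw hu; apply: leq_ltn_trans (card_far_lt euw (subxx _) (subxx _) hu).
apply/subset_leq_card/subsetP => a; rewrite in_setD => /andP[atyp aN].
by rewrite in_set aN; apply: contraNT atyp => nfar; rewrite in_set aN.
Qed.

Lemma card_nbhd_off_nbhdS_lt u v (S : {set T}) : e u v -> 2 * m * t < #|nbhd u :&: S| ->
  #|(nbhd v :\ u) :\: nbhdS S| < K.
Proof.
move=> euv huS; set Q := (nbhd u :&: S) :\ v.
have sQ : Q \subset nbhd u :\ v.
  by apply/subsetP => b; rewrite !inE => /andP[-> /andP[-> _]].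
have hQ : 2 * m * t <= #|Q|.
  move: huS; rewrite (cardsD1 v (nbhd u :&: S)) addnC -/Q.
  by case: (_ \in _) => /= h; [rewrite addn1 ltnS in h | rewrite addn0 in h; apply: ltnW].
apply: leq_ltn_trans (card_not_nbhdS_lt euv (subxx _) sQ hQ).
apply/subset_leq_card/setDS/nbhdS_mono/subsetP => b.
by rewrite !inE => /andP[_ /andP[_]].
Qed.

(** * Expansion around a set *)

Section Expansion.
Hypothesis K_small : 6 * K <= mindeg e.

Definition almost_in (U : {set T}) := [set z | #|nbhd z :\: U| <= K].

Lemma almost_in_mono (U V : {set T}) : U \subset V -> almost_in U \subset almost_in V.
Proof.
move=> sUV; apply/subsetP => z; rewrite !inE; apply: leq_trans.
exact/subset_leq_card/setDS.
Qed.

Lemma card_nbhdI_gt u (S : {set T}) : #|nbhd u :\: S| <= K -> 2 * m * t < #|nbhd u :&: S|.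
Proof.
have := mindeg_le_nbhd u; rewrite -(cardsID S (nbhd u)).
by have := two_m_t_le_K; have := K_gt0; lia.
Qed.

Lemma card_nbhdD1_ge u w : e u w -> 2 * m * t <= #|nbhd u :\ w|.
Proof.
move=> euw; have := mindeg_le_nbhd u; rewrite (cardsD1 w) in_nbhd euw.
by have := two_m_t_le_K; lia.
Qed.

Lemma almost_in_nbhdS U z : z \in almost_in U -> z \in nbhdS U.
Proof.
rewrite inE => /card_nbhdI_gt /(leq_ltn_trans (leq0n _)).
by case/card_gt0P => u; rewrite in_setI in_nbhd => /andP[ezu uU]; apply: nbhdS_intro uU ezu.
Qed.

Lemma nbhdS_almost_in U : nbhdS (almost_in U) \subset almost_in (nbhdS U).
Proof.
apply/subsetP => p; rewrite inE => /exists_inP[z zU epz]; have ezp : e z p by rewrite e_sym.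
rewrite inE; apply: (card_setD_le_of_setD1 (x := z) (subxx _)).
by apply: card_nbhd_off_nbhdS_lt ezp _; apply: card_nbhdI_gt; rewrite inE in zU.
Qed.

Section Layers.
Variable S0 : {set T}.
Hypotheses (S0_nonempty : S0 != set0) (connected : forall u v, connect e u v).
Hypothesis S0_border : {in nbhdS S0, forall v, #|nbhd v :\: almost_in S0| <= K}.

Definition ball j := iter j (fun U => U :|: nbhdS U) S0.
Definition layer j := ball j :\: ball j.-1.

Lemma ballS j : ball j.+1 = ball j :|: nbhdS (ball j).
Proof. by []. Qed.

Lemma ball_mono i j : i <= j -> ball i \subset ball j.
Proof.
move=> /subnK <-; elim: (j - i) => [|k IH]; first by rewrite add0n.
by apply: subset_trans IH _; rewrite addSn ballS subsetUl.
Qed.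

Lemma nbhdS_ball j : nbhdS (ball j) \subset ball j.+1.
Proof. by rewrite ballS subsetUr. Qed.

Lemma layer_almost_in j v : 0 < j -> v \in layer j ->
  #|nbhd v :\: almost_in (ball j.-1)| <= K.
Proof.
elim: j v => // j IH v _; rewrite in_setD => /andP[vj vj1].
have : v \in nbhdS (ball j) by move: vj1; rewrite ballS in_setU (negbTE vj).
case: j IH vj {vj1} => [_ _ /S0_border //|j IH vj].
rewrite inE => /exists_inP[u uj1 evu].
have uj : u \notin ball j.
  by apply: contra vj => uj; apply: (subsetP (nbhdS_ball j)); apply: nbhdS_intro uj evu.
have euv : e u v by rewrite e_sym.
have uL : u \in layer j.+1 by rewrite in_setD uj uj1.
have hu := card_nbhd_off_nbhdS_lt euv (card_nbhdI_gt (IH u erefl uL)).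
apply: (card_setD_le_of_setD1 _ hu).
exact: subset_trans (nbhdS_almost_in _) (almost_in_mono (nbhdS_ball j)).
Qed.

Lemma card_layer j : 0 < j ->
  #|layer j| * (mindeg e - K) <= K * #|almost_in (ball j.-1) :&: nbhdS (layer j)|.
Proof.
move=> j_gt0; apply: (double_count_leq (r := e) (c := 1)) => [v vL|z].
  rewrite mul1n; have := layer_almost_in j_gt0 vL.
  have := mindeg_le_nbhd v; rewrite -(cardsID (almost_in (ball j.-1)) (nbhd v)).
  suff : #|nbhd v :&: almost_in (ball j.-1)|
      <= #|[set z in almost_in (ball j.-1) :&: nbhdS (layer j) | e v z]| by lia.
  apply/subset_leq_card/subsetP => z; rewrite !in_setI in_nbhd => /andP[evz zM].
  by rewrite inE in_setI zM evz (nbhdS_intro vL) // e_sym.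
rewrite in_setI inE mul1n => /andP[zM _]; apply: leq_trans zM.
apply/subset_leq_card/subsetP => v; rewrite inE in_setD => /andP[vL evz].
by move: vL; rewrite in_setD in_nbhd e_sym evz => /andP[->].
Qed.

Lemma layer_shrink j : 1 < j -> 4 * #|layer j| <= #|layer j.-1|.
Proof.
case: j => [|[|j]] //= _; pose R := almost_in (ball j.+1) :&: nbhdS (layer j.+2).
have sR : R \subset layer j.+1 :|: layer j.+2.
  apply/subsetP => z; rewrite in_setI => /andP[zM]; rewrite inE => /exists_inP[v vL ezv].
  have zj2 : z \in ball j.+2 by apply/(subsetP (nbhdS_ball j.+1))/almost_in_nbhdS.
  have zj : z \notin ball j.
    move: vL; rewrite in_setD => /andP[vj _]; apply: contra vj => zj.
    by apply/(subsetP (nbhdS_ball j))/(nbhdS_intro zj); rewrite e_sym.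
  by rewrite !in_setU !in_setD zj zj2 /=; case: (z \in ball j.+1).
have hL : #|layer j.+2| * (mindeg e - K) <= K * #|R| := card_layer (isT : 0 < j.+2).
have h5K : #|layer j.+2| * (5 * K) <= #|layer j.+2| * (mindeg e - K).
  by rewrite leq_mul2l; apply/orP; right; lia.
have hR := leq_trans (subset_leq_card sR) (leq_card_setU _ _).
have := leq_trans (leq_trans h5K hL) (leq_mul (leqnn K) hR).
by move=> h; rewrite -(leq_pmul2l K_gt0); nia.
Qed.

Lemma card_ball_layer j : #|ball j.+1 :\: S0| = #|ball j :\: S0| + #|layer j.+1|.
Proof.
have sj : S0 \subset ball j by apply: (ball_mono (leq0n j)).
have sj1 : S0 \subset ball j.+1 by apply: (ball_mono (leq0n j.+1)).
have sjj : ball j \subset ball j.+1 by apply: ball_mono.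
rewrite /layer succnK !cardsDS //.
by have := subset_leq_card sj; have := subset_leq_card sjj; lia.
Qed.

Lemma card_ball_outside j : 3 * #|ball j.+1 :\: S0| + #|layer j.+1| <= 4 * #|layer 1|.
Proof.
elim: j => [|j IH]; first by rewrite /layer /=; lia.
by rewrite card_ball_layer; have := layer_shrink (isT : 1 < j.+2); rewrite succnK; lia.
Qed.

Lemma ball_full : ball #|T| = setT.
Proof.
have grow j : ball j = setT \/ j < #|ball j|.
  elim: j => [|j [IH|IH]]; first by right; rewrite card_gt0.
  - by left; apply/eqP; rewrite eqEsubset subsetT -IH ball_mono.
  case: (boolP (nbhdS (ball j) \subset ball j)) => [closed|open].
    left; apply/eqP; rewrite eqEsubset subsetT.
    rewrite -(nbhdS_closed_full connected _ closed) ?ball_mono //.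
    by rewrite -card_gt0; apply: leq_ltn_trans IH.
  by right; apply: leq_ltn_trans IH (proper_card _); rewrite ballS properUl.
by case: (grow #|T|) => //; rewrite ltnNge max_card.
Qed.

Lemma card_outside_S0 : 3 * #|~: S0| * (mindeg e - K) <= 4 * K * #|T|.
Proof.
have T_gt0 : 0 < #|T| by case/set0Pn: S0_nonempty => x _; apply/card_gt0P; exists x.
have out := card_ball_outside #|T|.-1; rewrite prednK // ball_full setTD in out.
have L1 := card_layer (isT : 0 < 1).
have R1 := max_card (mem (almost_in (ball 0) :&: nbhdS (layer 1))).
apply: (leq_trans (leq_mul (leq_trans (leq_addr _ _) out) (leqnn _))).
rewrite -mulnA -[4 * K * _]mulnA leq_mul2l /=; apply: leq_trans L1 _.
by rewrite leq_mul2l R1 orbT.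
Qed.

End Layers.
End Expansion.

(** * The edge x0 y0 *)

Section Anchor.
Variables x0 y0 : T.
Hypotheses (x0X : x0 \in X) (exy0 : e x0 y0)
  (x0_max : {in X, forall x, #|nbhd x| <= #|nbhd x0|}).
Hypotheses (m_ge6 : 6 <= m) (mindeg_large : 120 * m * (K + 2) <= mindeg e).

Lemma six_K_le_mindeg : 6 * K <= mindeg e.
Proof. exact: six_K_arith m_ge6 mindeg_large. Qed.

Definition core := typical x0 y0 :|: typical y0 x0.
Definition core_deg v := #|nbhd v :&: core|.
Definition sdeg := minn #|nbhd y0| #|nbhd x0|.
Definition rich := [set v | (m - 2) * sdeg <= m * (core_deg v + K + 2)].

Lemma mindeg_le_sdeg : mindeg e <= sdeg.
Proof. by rewrite leq_min !mindeg_le_nbhd. Qed.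

Lemma card_nbhd_core_sparse_lt u w a v :
  e u w -> typical w u \subset core -> a \in typical u w -> e v a ->
  #|(nbhd v :\ a) :\: [set p | (m - 2) * #|nbhd u| <= m * (core_deg p + K + 2)]| < K.
Proof.
move=> euw sTc ha eva; have ewu : e w u by rewrite e_sym.
have eav : e a v by rewrite e_sym.
set Nu := nbhd u :\ w; set Q := (nbhd a :&: typical w u) :\ v.
have sQ : Q \subset nbhd a :\ v.
  by apply/subsetP => b; rewrite !inE => /andP[-> /andP[-> _]].
have deg_u : #|nbhd u| = #|Nu| + 1 by rewrite (cardsD1 w) in_nbhd euw addnC.
have a_near : m * #|Nu :\: nbhd a| < #|Nu|.
  by move: ha; rewrite in_set /far -ltnNge => /andP[_].
have atyp := card_atypical_lt ewu (card_nbhdD1_ge six_K_le_mindeg ewu).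
have Nu_cover := card_le_cover_setI Nu (nbhd a) (typical w u) v.
have Q_le : #|Q| <= #|Nu|.
  apply/subset_leq_card/(subset_trans _ (typical_sub w u))/subsetP => b.
  by rewrite !inE => /andP[_ /andP[_]].
have hQ : 2 * m * t <= #|Q|.
  apply: (typical_overlap_arith m_ge6 two_m_t_le_K a_near atyp Nu_cover).
  by rewrite -deg_u; apply: leq_trans mindeg_large (mindeg_le_nbhd u).
apply: leq_ltn_trans (card_far_lt eav (subxx _) sQ hQ).
apply/subset_leq_card/subsetP => p; rewrite in_setD => /andP[sparse pN].
rewrite in_set pN /far leqNgt; apply: contra sparse => near; rewrite inE.
apply: (core_deg_arith m_ge6 a_near atyp Nu_cover Q_le near); last by rewrite deg_u.
rewrite -(cardsID (nbhd p) Q) leq_add2r /core_deg; apply/subset_leq_card/subsetP => b.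
rewrite !in_setI => /andP[bQ pb]; rewrite pb; apply: (subsetP sTc).
by move: bQ; rewrite in_setD1 in_setI => /andP[_ /andP[_]].
Qed.

Lemma nbhdS_core_sub : nbhdS core \subset almost_in rich.
Proof.
apply/subsetP => v; rewrite inE => /exists_inP[a a_core eva].
have [u [w [euw sTc ha hs]]] : exists u w,
    [/\ e u w, typical w u \subset core, a \in typical u w & sdeg <= #|nbhd u|].
  move: a_core; rewrite in_setU => /orP[ha|ha].
  - by exists x0, y0; split; rewrite ?subsetUr ?geq_minr.
  - by exists y0, x0; split; rewrite 1?e_sym ?subsetUl ?geq_minl.
rewrite inE; apply: (card_setD_le_of_setD1 _ (card_nbhd_core_sparse_lt euw sTc ha eva)).
by apply/subsetP => p; rewrite !inE; apply: leq_trans; rewrite leq_mul2l hs orbT.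
Qed.

Lemma rich_sub : rich \subset nbhdS core.
Proof.
apply/subsetP => v; rewrite inE => hv.
have := rich_core_deg_arith m_ge6 mindeg_large mindeg_le_sdeg hv.
move/(leq_ltn_trans (leq0n K)).
case/card_gt0P => a; rewrite in_setI in_nbhd => /andP[eva a_core].
exact: nbhdS_intro a_core eva.
Qed.

Lemma nbhdS_rich_sub : nbhdS rich \subset almost_in (nbhdS core).
Proof.
apply/subsetP => z; rewrite inE => /exists_inP[h h_rich ezh].
have ehz : e h z by rewrite e_sym.
rewrite inE; apply: (card_setD_le_of_setD1 (x := h) (subxx _)).
apply: card_nbhd_off_nbhdS_lt ehz (leq_ltn_trans two_m_t_le_K _).
by move: h_rich; rewrite inE => /(rich_core_deg_arith m_ge6 mindeg_large mindeg_le_sdeg).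
Qed.

Lemma nbhdS_core_border :
  {in nbhdS (nbhdS core), forall v, #|nbhd v :\: almost_in (nbhdS core)| <= K}.
Proof.
move=> v; rewrite inE => /exists_inP[c c_core evc]; have ecv : e c v by rewrite e_sym.
have := subsetP nbhdS_core_sub c c_core; rewrite inE => c_almost.
apply: (card_setD_le_of_setD1 (x := c) nbhdS_rich_sub).
exact: card_nbhd_off_nbhdS_lt ecv (card_nbhdI_gt six_K_le_mindeg c_almost).
Qed.

Lemma x0_in_nbhdS_core : x0 \in nbhdS core.
Proof.
have ey0x0 : e y0 x0 by rewrite e_sym.
have atyp := card_atypical_lt ey0x0 (card_nbhdD1_ge six_K_le_mindeg ey0x0).
have : 0 < #|(nbhd x0 :\ y0) :&: typical y0 x0|.
  have := mindeg_le_nbhd x0; rewrite (cardsD1 y0) in_nbhd exy0.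
  rewrite -(cardsID (typical y0 x0) (nbhd x0 :\ y0)).
  by have := six_K_le_mindeg; lia.
case/card_gt0P => b; rewrite in_setI in_setD1 in_nbhd => /andP[/andP[_ ex0b] b_typ].
by apply: (nbhdS_intro _ ex0b); rewrite in_setU b_typ orbT.
Qed.

Lemma card_nbhdS_core_not_rich : #|nbhdS core :\: rich| * (mindeg e - K) <= K * #|T|.
Proof.
apply: leq_trans (_ : K * #|rich| <= _); last by rewrite leq_mul2l max_card orbT.
apply: (double_count_leq (r := e) (c := 1)) => [v|z z_rich]; rewrite mul1n.
  rewrite in_setD => /andP[_ /(subsetP nbhdS_core_sub)]; rewrite inE => hv.
  have := mindeg_le_nbhd v; rewrite -(cardsID rich (nbhd v)).
  suff : #|nbhd v :&: rich| <= #|[set z in rich | e v z]| by lia.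
  apply/subset_leq_card/subsetP => z; rewrite in_setI in_nbhd => /andP[evz zr].
  by rewrite in_set zr evz.
have := subsetP nbhdS_core_sub z (subsetP rich_sub z z_rich); rewrite inE; apply: leq_trans.
apply/subset_leq_card/subsetP => v; rewrite in_set in_setD => /andP[/andP[vr _] evz].
by rewrite in_setD vr in_nbhd e_sym.
Qed.

Lemma nbhd_x0_sub : nbhd x0 \subset ~: X.
Proof. by apply/subsetP => b; rewrite in_nbhd inE => /edge_side ->; rewrite x0X. Qed.

Lemma nbhd_y0_sub : nbhd y0 \subset X.
Proof.
apply/subsetP => b; rewrite in_nbhd => /edge_side ->.
by rewrite (edge_side exy0) x0X.
Qed.

Lemma card_nbhd_typical_not_x0 a : a \in typical x0 y0 ->
  m * #|nbhd a :\: nbhd x0| <= m + #|nbhd x0|.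
Proof.
move=> a_typ; have aX : a \in X.
  apply: (subsetP nbhd_y0_sub).
  by move: (subsetP (typical_sub x0 y0) a a_typ); rewrite in_setD1 => /andP[].
have a_near : m * #|(nbhd x0 :\ y0) :\: nbhd a| < #|nbhd x0 :\ y0|.
  by move: a_typ; rewrite in_set /far -ltnNge => /andP[_].
have deg_a := x0_max aX.
have deg_x0 : #|nbhd x0| = #|nbhd x0 :\ y0| + 1 by rewrite (cardsD1 y0) in_nbhd exy0 addnC.
have : #|nbhd a :\: nbhd x0| <= #|(nbhd x0 :\ y0) :\: nbhd a| + 1.
  have common : #|(nbhd x0 :\ y0) :&: nbhd a| <= #|nbhd a :&: nbhd x0|.
    by apply/subset_leq_card/subsetP => b; rewrite !inE => /andP[/andP[_ ->] ->].
  have := cardsID (nbhd x0) (nbhd a); have := cardsID (nbhd a) (nbhd x0 :\ y0); lia.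
by nia.
Qed.

Lemma card_rich_nonnbr :
  #|(~: X :&: rich) :\: nbhd x0| * ((m - 2) * sdeg - m * (K + 2))
    <= (m + #|nbhd x0|) * #|nbhd y0|.
Proof.
apply: leq_trans (_ : (m + #|nbhd x0|) * #|typical x0 y0| <= _); last first.
  have := subset_leq_card (subset_trans (typical_sub x0 y0) (subD1set _ _)).
  by rewrite leq_mul2l orbC => ->.
apply: (double_count_leq (r := e) (c := m)) => [y|a a_typ].
  rewrite !in_setD !in_setI in_setC => /andP[_ /andP[yX y_rich]].
  apply: leq_trans (_ : m * core_deg y <= _).
    by move: y_rich; rewrite inE; lia.
  rewrite leq_mul2l; apply/orP; right; apply/subset_leq_card/subsetP => a.
  rewrite in_setI in_nbhd in_setU => /andP[eya /orP[a_typ|a_typ]].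
    by rewrite in_set a_typ.
  have := subsetP (subset_trans (typical_sub y0 x0) (subD1set _ _)) a a_typ.
  by rewrite in_nbhd => /edge_side; rewrite x0X (edge_side eya) (negbTE yX).
apply: leq_trans (card_nbhd_typical_not_x0 a_typ); rewrite leq_mul2l; apply/orP; right.
apply/subset_leq_card/subsetP => y; rewrite in_set in_setD in_setI => /andP[/andP[yx0 _] eya].
by rewrite in_setD yx0 in_nbhd e_sym.
Qed.

Lemma card_nonnbr_x0 : (forall u v, connect e u v) -> #|X| = #|~: X| ->
  m * mindeg e * (#|~: X| - #|nbhd x0|)
    <= 2 * #|~: X| * mindeg e + m * #|~: X| * (40 * m * (K + 2)).
Proof.
move=> conn balanced; have card_T : #|T| = 2 * #|~: X| by rewrite -(cardsC X) balanced; lia.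
have hY := rich_nonnbr_arith m_ge6 mindeg_large mindeg_le_sdeg
  (leq_trans (subset_leq_card nbhd_y0_sub) (eq_leq balanced))
  (subset_leq_card nbhd_x0_sub) card_rich_nonnbr.
have core_nonempty : nbhdS core != set0 by apply/set0Pn; exists x0; apply: x0_in_nbhdS_core.
have hZ1 := card_outside_S0 six_K_le_mindeg core_nonempty conn nbhdS_core_border.
have hZ2 := card_nbhdS_core_not_rich; rewrite card_T in hZ1 hZ2.
apply: (nonnbr_arith m_ge6 mindeg_large hY hZ1 hZ2).
have cover : ~: X :\: nbhd x0 \subset
    ((~: X :&: rich) :\: nbhd x0) :|: ~: nbhdS core :|: (nbhdS core :\: rich).
  apply/subsetP => y; rewrite !in_setU !in_setD !in_setI in_setC => /andP[-> ->] /=.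
  by rewrite in_setC; case: (y \in rich); case: (y \in nbhdS core).
rewrite -cardsDS ?nbhd_x0_sub //; apply: leq_trans (subset_leq_card cover) _.
by do 2 (apply: leq_trans (leq_card_setU _ _) _; rewrite leq_add2r).
Qed.

End Anchor.

Lemma maxdeg_bound : (forall u v, connect e u v) -> #|X| = #|~: X| -> 6 <= m ->
  120 * m * (K + 2) <= mindeg e ->
  maxdeg_in e X <= #|~: X| /\
  m * mindeg e * (#|~: X| - maxdeg_in e X)
    <= 2 * #|~: X| * mindeg e + m * #|~: X| * (40 * m * (K + 2)).
Proof.
move=> conn balanced m_ge6 mindeg_large.
have [X0|X_gt0] := posnP #|X|.
  have -> : maxdeg_in e X = 0.
    by rewrite /maxdeg_in big_pred0 // => v; rewrite (cards0_eq X0) inE.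
  by rewrite -balanced X0; split; rewrite ?muln0.
have [x0 x0X deg_x0] := eq_bigmax_cond (deg e) X_gt0.
have x0_max : {in X, forall x, #|nbhd x| <= #|nbhd x0|}.
  by move=> x xX; rewrite -[#|nbhd x0|]/(deg e x0) -deg_x0; apply: leq_bigmax_cond.
have : 0 < #|nbhd x0|.
  have := six_K_arith m_ge6 mindeg_large; have := mindeg_le_nbhd x0; have := K_gt0; lia.
case/card_gt0P => y0; rewrite in_nbhd => exy0.
rewrite /maxdeg_in deg_x0; split; first exact/subset_leq_card/(nbhd_x0_sub x0X).
exact: card_nonnbr_x0 x0X exy0 x0_max m_ge6 mindeg_large conn balanced.
Qed.

End BiclawFree.

Local Open Scope ring_scope.

Lemma ratio_bound_of_nat (R : realFieldType) (n D d m C : nat) (eps : R) :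
  (D <= n)%N -> (m * d * (n - D) <= 2 * n * d + m * n * C)%N ->
  3 * C%:R <= d%:R :> R -> 1 < eps * m%:R -> 0 < eps -> (0 < d)%N ->
  (1 - C%:R / d%:R) * (1 - 10 * eps) * n%:R <= D%:R.
Proof.
move=> Dn hnat hC hme eps_gt0 d_gt0.
have m_gt0 : (0 < m)%N by case: m hme {hnat} => [|//]; rewrite mulr0 ltr10.
have dR_gt0 : 0 < d%:R :> R by rewrite ltr0n.
have mR_gt0 : 0 < m%:R :> R by rewrite ltr0n.
have key : (m * d * (n - D))%:R <= (2 * n * d + m * n * C)%:R :> R by rewrite ler_nat.
rewrite !natrM !natrD !natrM natrB // in key.
set nR := n%:R in key *; set DR := D%:R in key *; set dR := d%:R in key hC dR_gt0 *.
set mR := m%:R in key hme mR_gt0 *; set CR := C%:R in key hC *.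
have -> : (1 - CR / dR) * (1 - 10 * eps) * nR = (dR - CR) * (1 - 10 * eps) * nR / dR.
  by field; apply/lt0r_neq0.
rewrite ler_pdivrMr // -(ler_pM2l mR_gt0).
have C_ge0 : 0 <= CR by rewrite ler0n.
have n_ge0 : 0 <= nR by rewrite ler0n.
have slack : 2 * dR <= 10 * (eps * mR) * (dR - CR) by nra.
have : nR * (2 * dR) <= nR * (10 * (eps * mR) * (dR - CR)) by apply: ler_wpM2l.
nra.
Qed.

(* m > 1/eps, so that the term 2n/m in the bound on n - Delta_X is below 2 eps n. *)
Definition m_of_eps (R : realType) (eps : R) : nat := (Num.truncn eps^-1 + 6)%N.

Lemma m_of_eps_ge6 (R : realType) (eps : R) : (6 <= m_of_eps eps)%N.
Proof. by rewrite /m_of_eps leq_addl. Qed.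

Lemma eps_m_of_eps_gt1 (R : realType) (eps : R) : 0 < eps -> 1 < eps * (m_of_eps eps)%:R.
Proof.
move=> eps_gt0; have epsV_gt0 : 0 < eps^-1 by rewrite invr_gt0.
rewrite -(ltr_pM2l epsV_gt0) mulr1 mulKf ?lt0r_neq0 //.
apply: lt_le_trans (real_truncnS_gt (num_real _)) _.
by rewrite ler_nat /m_of_eps addnS ltnS leq_addr.
Qed.

Theorem mainTheorem14 (R : realType) :
  exists C : nat -> R -> R,
  forall (t : nat) (eps : R), (0 < t)%N -> 0 < eps < 1 ->
  forall (T : finType) (e : rel T) (X : {set T}),
    symmetric e -> irreflexive e ->
    (forall u v, e u v -> (u \in X) != (v \in X)) ->
    #|X| = #|~: X| ->
    (forall u v, connect e u v) ->
    3 * C t eps <= (mindeg e)%:R ->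
    ~ has_induced_biclaw e t t ->
    (1 - C t eps / (mindeg e)%:R) * (1 - 10 * eps) * (#|X|)%:R
      <= (maxdeg_in e X)%:R /\
    (1 - C t eps / (mindeg e)%:R) * (1 - 10 * eps) * (#|X|)%:R
      <= (maxdeg_in e (~: X))%:R.
Proof.
exists (fun t eps => (40 * m_of_eps eps * (K t (m_of_eps eps) + 2))%:R).
move=> t eps t_gt0 /andP[eps_gt0 _] T e X e_sym _ e_bip balanced conn hC no_biclaw.
set m := m_of_eps eps in hC *.
have m_ge6 : (6 <= m)%N := m_of_eps_ge6 eps.
have m_gt0 : (0 < m)%N by apply: leq_trans m_ge6.
have hd : (120 * m * (K t m + 2) <= mindeg e)%N.
  by move: hC; rewrite -[3]/(3%:R) -natrM ler_nat !mulnA.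
have d_gt0 : (0 < mindeg e)%N by apply: leq_trans hd; rewrite !muln_gt0 m_gt0 addn2.
have e_bipC u v : e u v -> (u \in ~: X) != (v \in ~: X).
  by move/e_bip; rewrite !inE; case: (u \in X); case: (v \in X).
have balancedC : #|~: X| = #|~: ~: X| by rewrite setCK.
have [DX boundX] := maxdeg_bound e_sym e_bip t_gt0 m_gt0 no_biclaw conn balanced m_ge6 hd.
have [DY boundY] := maxdeg_bound e_sym e_bipC t_gt0 m_gt0 no_biclaw conn balancedC m_ge6 hd.
rewrite -balanced in DX boundX; rewrite setCK in DY boundY.
by split; apply: ratio_bound_of_nat (eps_m_of_eps_gt1 eps_gt0) eps_gt0 d_gt0.
Qed.
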